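(* Let $S$ be a numerical semigroup and $G=G(S)=(V,E)$ its associated graph. Let $v_1\ne v_2\in V$ and suppose $v_2-v_1\in S$. Then $\deg(v_1)>\deg(v_2)$.
   Context: A numerical semigroup is a subset $S\subseteq\mathbb N$ containing $0$, closed under addition, with finite complement; $S^*=S\setminus\{0\}$, $m=\min S^*$, $X=\{s\in S^*: s-m\notin S\}$. The graph $G(S)$ has edge set all subsets $\{x,y\}\subseteq X$ ($x=y$ allowed) with $x+y\in X$, and vertex set $V$ the endvertices of these edges. For $x\in V$, $N_G(x)=\{y\in X: x+y\in X\}$ (which contains $x$ if $2x\in X$) and $\deg(x)=|N_G(x)|$. *)

From mathcomp Require Import all_boot.
Set Implicit Arguments. Unset Strict Implicit. Unset Printing Implicit Defensive.

(* S is a numerical semigroup: 0 in S, closed under +, finite complement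
   (witnessed by a bound c such that every n >= c lies in S). *)
Definition numerical_semigroup (S : pred nat) : Prop :=
  S 0 /\ (forall x y, S x -> S y -> S (x + y)) /\
  exists c, forall n, c <= n -> S n.

Definition is_multiplicity (S : pred nat) (m : nat) : Prop :=
  [/\ 0 < m, S m & forall s, S s -> 0 < s -> m <= s].

(* X = { s in S^* : s - m notin S } (s - m < 0 counts as "not in S";
   for s in S^*, s >= m, so truncated subtraction agrees except s = m,
   where both readings give m notin X). *)
Definition inX (S : pred nat) (m s : nat) : bool :=
  [&& S s, 0 < s & ~~ S (s - m)].

(* Vertex set V of G(S): endvertices of edges {x,y} subset X with x+y in X. *)
Definition inV (S : pred nat) (m x : nat) : Prop :=
  inX S m x /\ exists y, inX S m y && inX S m (x + y).

Definition nbhd (S : pred nat) (m x : nat) : pred nat :=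
  fun y => inX S m y && inX S m (x + y).

(* Every element of X is < c + m whenever all n >= c lie
   in S (if s in X then s - m notin S, so s - m < c), hence counting over
   [0, c + m) counts all of N_G(x); the value does not depend on the
   admissible bound c chosen. *)
Definition deg (S : pred nat) (m c x : nat) : nat :=
  count (nbhd S m x) (iota 0 (c + m)).

From mathcomp Require Import all_boot.
From mathcomp Require Import zify.

(* Write v2 = d + v1 with d in S^*.  Since every summand in S^* of an element
   of X lies in X again, y |-> y + d maps N_G(v2) injectively into N_G(v1);
   its image misses d, which lies in N_G(v1) because d + v1 = v2 is in X. *)

Lemma count_lt_inj (T : eqType) (p q : pred T) (f : T -> T) (x0 : T) (s : seq T) :
  uniq s -> {subset q <= s} -> injective f ->
  (forall y, p y -> q (f y)) -> (forall y, p y -> f y != x0) -> q x0 ->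
  count p s < count q s.
Proof.
move=> s_uniq q_sub f_inj pq f_x0 q_x0.
set t := x0 :: map f (filter p s).
have t_uniq : uniq t.
  rewrite /= (map_inj_uniq f_inj) filter_uniq // andbT.
  apply/mapP => -[y]; rewrite mem_filter => /andP [py _] x0E.
  by move: (f_x0 y py); rewrite x0E eqxx.
have t_sub : {subset t <= filter q s}.
  move=> z; rewrite inE mem_filter => /orP [/eqP -> | /mapP [y]].
    by rewrite q_x0 (q_sub _ q_x0).
  rewrite mem_filter => /andP [py _] ->.
  by rewrite pq ?(q_sub _ (pq _ py)).
by have := uniq_leq_size t_uniq t_sub; rewrite /= size_map !size_filter.
Qed.

Section GraphOfSemigroup.

Variables (S : pred nat) (m : nat).
Hypothesis S_add : forall x y, S x -> S y -> S (x + y).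
Hypothesis m_min : forall s, S s -> 0 < s -> m <= s.

Lemma inX_lt_bound (c z : nat) :
  (forall n, c <= n -> S n) -> inX S m z -> z < c + m.
Proof.
move=> S_ge_c /and3P [_ _ zmS]; rewrite ltnNge; apply: contra zmS => czm.
by apply: S_ge_c; lia.
Qed.

Lemma inX_summand (a b : nat) :
  S a -> S b -> 0 < a -> inX S m (a + b) -> inX S m a.
Proof.
move=> Sa Sb a_gt0 /and3P [_ _ abmS]; rewrite /inX Sa a_gt0.
apply: contra abmS => amS; have ma : m <= a by exact: m_min.
by rewrite (_ : a + b - m = (a - m) + b) ?S_add //; lia.
Qed.

Lemma nbhd_shift (v d y : nat) :
  S v -> S d -> nbhd S m (d + v) y -> nbhd S m v (y + d).
Proof.
move=> Sv Sd /andP [Xy Xdvy]; have /and3P [Sy y_gt0 _] := Xy.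
have v_ydE : v + (y + d) = d + v + y by lia.
have yd_vE : y + d + v = d + v + y by lia.
rewrite /nbhd v_ydE Xdvy andbT.
apply: (inX_summand _ v) => //; first exact: S_add.
  by rewrite addn_gt0 y_gt0.
by rewrite yd_vE.
Qed.

Lemma nbhd_diff (v d : nat) :
  S v -> S d -> 0 < d -> inX S m (d + v) -> nbhd S m v d.
Proof.
move=> Sv Sd d_gt0 Xdv; rewrite /nbhd addnC Xdv andbT.
exact: (inX_summand _ v).
Qed.

Lemma deg_lt_add (c v d : nat) :
  (forall n, c <= n -> S n) -> S v -> S d -> 0 < d -> inX S m (d + v) ->
  deg S m c (d + v) < deg S m c v.
Proof.
move=> S_ge_c Sv Sd d_gt0 Xdv.
rewrite /deg; apply: (count_lt_inj _ _ _ (addn^~ d) d); rewrite ?iota_uniq //.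
- move=> z /andP [Xz _]; rewrite mem_iota add0n.
  exact: inX_lt_bound S_ge_c Xz.
- exact: addIn.
- by move=> y; apply: nbhd_shift.
- move=> y /andP [/and3P [_ y_gt0 _] _].
  by rewrite -{2}(add0n d) eqn_add2r -lt0n.
- exact: nbhd_diff.
Qed.

End GraphOfSemigroup.

Theorem proposition4p7 (S : pred nat) (m c v1 v2 : nat) :
  numerical_semigroup S ->
  is_multiplicity S m ->
  (forall n, c <= n -> S n) ->
  inV S m v1 -> inV S m v2 -> v1 <> v2 ->
  v1 <= v2 -> S (v2 - v1) ->
  deg S m c v2 < deg S m c v1.
Proof.
move=> [_ [S_add _]] [_ _ m_min] S_ge_c [/and3P [Sv1 _ _] _] [Xv2 _] v12 le_v12 Sd.
have v2E : v2 = (v2 - v1) + v1 by rewrite subnK.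
have d_gt0 : 0 < v2 - v1 by rewrite subn_gt0 ltn_neqAle le_v12 andbT; apply/eqP.
by rewrite v2E; apply: deg_lt_add; rewrite -?v2E.
Qed.
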